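(* Let $G$ be a finite two-player zero-sum extensive form game with perfect recall, and run CFR or CFR$^+$ with alternating updates (Player 1 updated first) on $G$. Let $t\ge 0$, let $p$ be the player about to be updated at time $t$, let $\sigma^t_p$ be $p$'s current strategy, and let $\sigma_o$ be the opponent strategy used in $p$'s update values, i.e. $\sigma_o=\sigma^t_2$ if $p=1$ and $\sigma_o=\sigma^{t+1}_1$ if $p=2$. Then $$u_p^{(\sigma^{t+1}_p,\sigma_o)}\ge u_p^{(\sigma^t_p,\sigma_o)}.$$
   Context: Extensive form game: a finite tree of histories $h$ (sequences of actions from the root $\emptyset$), terminal histories $Z$, actions $A(h)$ at nonterminal $h$, an acting player $P(h)\in\{1,2,c\}$ where $c$ is chance acting with fixed probabilities, utilities $u_1(z)=-u_2(z)$ at terminals, and for each player a partition of that player's histories into information sets $I$ (all $h\in I$ share the same legal actions $A(I)$). Perfect recall: any two histories in one information set of player $p$ pass through the same sequence of player-$p$ information sets and player-$p$ actions. A strategy $\sigma_p$ gives a distribution $\boldsymbol{\sigma}_p(I)$ over $A(I)$ for each player-$p$ information set; $u^{\boldsymbol\sigma}_p$ is player $p$'s expected utility under profile $\boldsymbol\sigma$. For a profile $\boldsymbol{\sigma}$ and terminal $z$, $\pi^{\boldsymbol\sigma}_{-p}(z)$ is the product of the probabilities of all actions on the path to $z$ taken by chance and by $p$'s opponent; for $h\sqsubseteq z$, $\pi^{\boldsymbol\sigma}_p(z\mid h)$ is the product of the probabilities under $\sigma_p$ of player $p$'s actions on the path from $h$ to $z$. Counterfactual values: $v^{\boldsymbol\sigma}_p(h):=\sum_{z\in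 Z,\,h\sqsubseteq z}\pi^{\boldsymbol\sigma}_{-p}(z)\pi^{\boldsymbol\sigma}_p(z\mid h)u_p(z)$, and for an information set $I$ of player $p$, $v^{\boldsymbol\sigma}(I)_a:=\sum_{h\in I}v^{\boldsymbol\sigma}_p(ha)$, $a\in A(I)$. Let $x^+=\max(x,0)$ componentwise and $\boldsymbol{\sigma}_{\mathrm{rm}}(\boldsymbol{x}):=\boldsymbol{x}^+/(\boldsymbol{1}\cdot\boldsymbol{x}^+)$ if some $x_a>0$, else $\boldsymbol{1}/|A|$. CFR with alternating updates keeps for each information set $I$ a vector $\boldsymbol{r}^t(I)$ with $\boldsymbol{r}^0(I)=\boldsymbol 0$, plays $\boldsymbol\sigma^t(I)=\boldsymbol{\sigma}_{\mathrm{rm}}(\boldsymbol{r}^t(I))$, and updates $\boldsymbol{r}^{t+1}(I)=\boldsymbol{r}^t(I)+\boldsymbol{v}^t(I)-(\boldsymbol\sigma^t(I)\cdot\boldsymbol{v}^t(I))\boldsymbol 1$; CFR$^+$ instead keeps $\boldsymbol{q}^t(I)$ with $\boldsymbol{q}^0(I)=\boldsymbol 0$, $\boldsymbol\sigma^t(I)=\boldsymbol{\sigma}_{\mathrm{rm}}(\boldsymbol{q}^t(I))$, $\boldsymbol{q}^{t+1}(I)=(\boldsymbol{q}^t(I)+\boldsymbol{v}^t(I)-(\boldsymbol\sigma^t(I)\cdot\boldsymbol{v}^t(I))\boldsymbol 1)^+$. In both, $\boldsymbol{v}^t(I)=\boldsymbol{v}^{(\sigma^t_1,\sigma^t_2)}(I)$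 if $I$ belongs to Player 1 and $\boldsymbol{v}^t(I)=\boldsymbol{v}^{(\sigma^{t+1}_1,\sigma^t_2)}(I)$ if $I$ belongs to Player 2. *)

(* Extensive-form games as finite trees; histories are
   paths from the root given as sequences of action indices. *)
From HB Require Import structures.
From mathcomp Require Import all_boot all_order all_algebra.
Set Implicit Arguments. Unset Strict Implicit. Unset Printing Implicit Defensive.
Import Order.TTheory GRing.Theory Num.Theory.
Local Open Scope ring_scope.

Inductive player := P1 | P2.

Definition peq (p q : player) : bool :=
  match p, q with P1, P1 | P2, P2 => true | _, _ => false end.

(* A game tree.  [Leaf u]: terminal with u_1 = u (and u_2 = -u).
   [Chance n pr kids]: chance node with actions 0..n-1, action a taken with
   probability pr a, leading to kids a.
   [Node q I n kids]: player q acts, history lies in q's information set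
   labelled I, actions 0..n-1. *)
Inductive tree (R : Type) : Type :=
| Leaf (u : R)
| Chance (n : nat) (pr : nat -> R) (kids : nat -> tree R)
| Node (q : player) (I : nat) (n : nat) (kids : nat -> tree R).
Arguments Leaf {R}.
Arguments Chance {R}.
Arguments Node {R}.

Section Games.
Variable R : realFieldType.

(* a strategy of a player: information set label -> action -> probability *)
Definition strat := nat -> nat -> R.

Fixpoint node_at (t : tree R) (h : seq nat) : option (tree R) :=
  match h with
  | [::] => Some t
  | a :: h' =>
    match t with
    | Leaf _ => None
    | Chance n _ k => if (a < n)%N then node_at (k a) h' else None
    | Node _ _ n k => if (a < n)%N then node_at (k a) h' else None
    end
  end.

Fixpoint histories (t : tree R) : seq (seq nat) :=
  match t with
  | Leaf _ => [:: [::]]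
  | Chance n _ k =>
      [::] :: flatten [seq [seq a :: h | h <- histories (k a)] | a <- iota 0 n]
  | Node _ _ n k =>
      [::] :: flatten [seq [seq a :: h | h <- histories (k a)] | a <- iota 0 n]
  end.

Definition is_terminal (t : tree R) (h : seq nat) : bool :=
  if node_at t h is Some (Leaf _) then true else false.

Definition terminals (t : tree R) : seq (seq nat) :=
  [seq z <- histories t | is_terminal t z].

Definition util (t : tree R) (p : player) (z : seq nat) : R :=
  let u1 := if node_at t z is Some (Leaf u) then u else 0 in
  if p is P1 then u1 else - u1.

Definition in_infoset (t : tree R) (p : player) (I : nat) (h : seq nat) : bool :=
  if node_at t h is Some (Node q J _ _) then peq q p && (J == I) else false.

Fixpoint path_prob (c b1 b2 : bool) (s1 s2 : strat) (t : tree R) (z : seq nat) : R :=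
  match z with
  | [::] => 1
  | a :: z' =>
    match t with
    | Leaf _ => 1
    | Chance _ pr k => (if c then pr a else 1) * path_prob c b1 b2 s1 s2 (k a) z'
    | Node q J _ k =>
        (if q is P1 then (if b1 then s1 J a else 1) else (if b2 then s2 J a else 1))
        * path_prob c b1 b2 s1 s2 (k a) z'
    end
  end.

(* pi^sigma_{-p}(z) : chance and opponent actions on the path to z *)
Definition pi_opp (t : tree R) (p : player) (s1 s2 : strat) (z : seq nat) : R :=
  path_prob true (peq p P2) (peq p P1) s1 s2 t z.

(* pi^sigma_p(z | h) : p's actions on the path from h to z (h a prefix of z) *)
Definition pi_own_from (t : tree R) (p : player) (s1 s2 : strat) (h z : seq nat) : R :=
  if node_at t h is Some t' then
    path_prob false (peq p P1) (peq p P2) s1 s2 t' (drop (size h) z)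
  else 0.

Definition prefix (h z : seq nat) : bool := h == take (size h) z.

Definition cf_value (t : tree R) (p : player) (s1 s2 : strat) (h : seq nat) : R :=
  \sum_(z <- terminals t | prefix h z)
     pi_opp t p s1 s2 z * pi_own_from t p s1 s2 h z * util t p z.

Definition cfv (t : tree R) (p : player) (s1 s2 : strat) (I a : nat) : R :=
  \sum_(h <- histories t | in_infoset t p I h) cf_value t p s1 s2 (rcons h a).

Definition exp_util (t : tree R) (p : player) (s1 s2 : strat) : R :=
  \sum_(z <- terminals t) path_prob true true true s1 s2 t z * util t p z.

(* nA p I = |A(I)|: all histories of an information set have the same
   number of actions; nonterminal histories have at least one action;
   chance probabilities form a distribution. *)
Definition well_formed (t : tree R) (nA : player -> nat -> nat) : Prop :=
  (forall h q I n k, node_at t h = Some (Node q I n k) -> n = nA q I /\ (0 < n)%N) /\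
  (forall h n pr k, node_at t h = Some (Chance n pr k) ->
      (0 < n)%N /\ (forall a, (a < n)%N -> 0 <= pr a) /\ \sum_(a < n) pr a = 1).

Fixpoint own_seq (p : player) (t : tree R) (z : seq nat) : seq (nat * nat) :=
  match z with
  | [::] => [::]
  | a :: z' =>
    match t with
    | Leaf _ => [::]
    | Chance _ _ k => own_seq p (k a) z'
    | Node q J _ k => (if peq q p then [:: (J, a)] else [::]) ++ own_seq p (k a) z'
    end
  end.

Definition perfect_recall (t : tree R) : Prop :=
  forall p I h h', in_infoset t p I h -> in_infoset t p I h' ->
    own_seq p t h = own_seq p t h'.

Definition pos (x : R) : R := Num.max x 0.

Definition sigma_rm (n : nat) (x : nat -> R) : nat -> R :=
  fun a => if [exists b : 'I_n, 0 < x b]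
           then pos (x a) / \sum_(b < n) pos (x b)
           else n%:R^-1.

(* r + v - (sigma . v) 1, followed by (.)^+ when plus = true (CFR+) *)
Definition regret_update (plus : bool) (n : nat) (r sg v : nat -> R) : nat -> R :=
  fun a => let x := r a + v a - \sum_(b < n) sg b * v b in
           if plus then pos x else x.

Definition strat_of (nA : player -> nat -> nat) (r : player -> nat -> nat -> R)
  (p : player) : strat := fun I => sigma_rm (nA p I) (r p I).

(* one iteration: update player 1 with (s1^t, s2^t), then player 2 with
   (s1^{t+1}, s2^t) *)
Definition cfr_step (plus : bool) (t : tree R) (nA : player -> nat -> nat)
  (r : player -> nat -> nat -> R) : player -> nat -> nat -> R :=
  let s1 := strat_of nA r P1 in
  let s2 := strat_of nA r P2 in
  let r1 := fun I => regret_update plus (nA P1 I) (r P1 I) (s1 I) (cfv t P1 s1 s2 I) in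
  let s1' : strat := fun I => sigma_rm (nA P1 I) (r1 I) in
  let r2 := fun I => regret_update plus (nA P2 I) (r P2 I) (s2 I) (cfv t P2 s1' s2 I) in
  fun p => if p is P1 then r1 else r2.

Definition regrets (plus : bool) (t : tree R) (nA : player -> nat -> nat) (T : nat) :
  player -> nat -> nat -> R :=
  iter T (cfr_step plus t nA) (fun _ _ _ => 0).

Definition cfr_strat (plus : bool) (t : tree R) (nA : player -> nat -> nat) (T : nat)
  (p : player) : strat := strat_of nA (regrets plus t nA T) p.

End Games.

From Pilot Require Import Defs.
From mathcomp Require Import all_boot all_order all_algebra.
From mathcomp Require Import ring.
Set Implicit Arguments. Unset Strict Implicit. Unset Printing Implicit Defensive.
Import Order.TTheory GRing.Theory Num.Theory.
Local Open Scope ring_scope.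

(* Regret matching is a local improvement: if [sigma'] is obtained from
   [sigma] by one CFR or CFR+ update against values [v], then
   [sigma' . v >= sigma . v], because the positive part of the regrets is
   orthogonal to [v - (sigma . v) 1] and [x |-> x^+] is monotone.
   Globally, the performance-difference identity writes the change of p's
   expected utility as a sum, over p's decision histories [h], of the reach
   probability of [h] under the new profile times the local gain at [h].
   Grouped by information set, p's own reach probability is constant on each
   [I] by perfect recall, and the remaining chance-and-opponent reach turns
   the local values into the counterfactual values [v(I)]; so each group is a
   nonnegative multiple of the local improvement
   [(sigma'(I) - sigma(I)) . v(I) >= 0]. *)

Section RegretMatching.
Variable R : realFieldType.
Implicit Types (n : nat) (x y : R) (r v w : nat -> R).

Lemma pos_ge0 x : 0 <= pos x.
Proof. by rewrite /pos le_max lexx orbT. Qed.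

Lemma pos_gt0 x : (0 < pos x) = (0 < x).
Proof. by rewrite /pos lt_max ltxx orbF. Qed.

Lemma pos_le0 x : x <= 0 -> pos x = 0.
Proof. exact: max_r. Qed.

Lemma pos_id x : pos (pos x) = pos x.
Proof. exact/max_l/pos_ge0. Qed.

Lemma pos_mulr x : pos x * x = pos x ^+ 2.
Proof.
case: (leP x 0) => [/pos_le0 -> | /ltW x_ge0]; first by rewrite mul0r expr0n.
by rewrite /pos (max_l x_ge0).
Qed.

Lemma pos_monotone x y : 0 <= (pos y - pos x) * (y - x).
Proof.
wlog le_xy : x y / x <= y.
  move=> le_pos; case: (leP x y) => [|/ltW]; first exact: le_pos.
  by move/le_pos; rewrite -mulrNN !opprB.
by apply: mulr_ge0; rewrite subr_ge0 //; apply: le_max2.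
Qed.

Lemma psumr_gt0 n (F : 'I_n -> R) b :
  (forall a, 0 <= F a) -> 0 < F b -> 0 < \sum_a F a.
Proof. by move=> F_ge0 Fb; rewrite (bigD1 b) //= ltr_pwDl // sumr_ge0. Qed.

Lemma sum_pos_gt0 n r :
  [exists b : 'I_n, 0 < r b] -> 0 < \sum_(b < n) pos (r b).
Proof.
by case/existsP=> b rb; apply: (psumr_gt0 (b := b)) => [a|]; rewrite ?pos_ge0 ?pos_gt0.
Qed.

Lemma sigma_rm_ge0 n r a : 0 <= sigma_rm n r a.
Proof.
rewrite /sigma_rm; case: ifP => _; last by rewrite invr_ge0 ler0n.
by rewrite divr_ge0 ?pos_ge0 ?sumr_ge0 // => b _; rewrite pos_ge0.
Qed.

Lemma sigma_rm_pos n r a : sigma_rm n (fun b => pos (r b)) a = sigma_rm n r a.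
Proof.
rewrite /sigma_rm (eq_existsb (fun b : 'I_n => pos_gt0 (r b))).
by under eq_bigr do rewrite pos_id; rewrite pos_id.
Qed.

Lemma sigma_rm_value_gap n r w c : [exists b : 'I_n, 0 < r b] ->
  \sum_(a < n) sigma_rm n r a * w a - c
  = (\sum_(a < n) pos (r a) * (w a - c)) / \sum_(b < n) pos (r b).
Proof.
move=> r_pos; have Pr_neq0 := lt0r_neq0 (sum_pos_gt0 r_pos).
under [in RHS]eq_bigr do rewrite mulrBr.
rewrite sumrB -mulr_suml mulrBl mulrAC mulfV // mul1r mulr_suml /sigma_rm r_pos.
by congr (_ - _); apply: eq_bigr => a _; rewrite mulrAC.
Qed.

Lemma pos_regret_orthogonal n r v :
  \sum_(a < n) pos (r a) * (v a - \sum_(b < n) sigma_rm n r b * v b) = 0.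
Proof.
case: (boolP [exists b : 'I_n, 0 < r b]) => [r_pos | r_npos].
  have := sigma_rm_value_gap v (\sum_(b < n) sigma_rm n r b * v b) r_pos.
  rewrite subrr => /esym/eqP; rewrite mulf_eq0 invr_eq0.
  by rewrite (negbTE (lt0r_neq0 (sum_pos_gt0 r_pos))) orbF => /eqP.
apply: big1 => a _; rewrite pos_le0 ?mul0r // leNgt.
by apply: contra r_npos => ra; apply/existsP; exists a.
Qed.

Lemma regret_matching_improves plus n r v :
  \sum_(a < n) sigma_rm n r a * v a
  <= \sum_(a < n) sigma_rm n (regret_update plus n r (sigma_rm n r) v) a * v a.
Proof.
set S := \sum_(b < n) sigma_rm n r b * v b.
pose y a := r a + v a - S.
have gapE a : v a - S = y a - r a by rewrite /y; ring.
have -> : \sum_(a < n) sigma_rm n (regret_update plus n r (sigma_rm n r) v) a * v a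
          = \sum_(a < n) sigma_rm n y a * v a.
  by apply: eq_bigr => a _; case: plus; rewrite /regret_update ?sigma_rm_pos.
have orth : \sum_(a < n) pos (r a) * (y a - r a) = 0.
  by rewrite -[RHS](pos_regret_orthogonal n r v); apply: eq_bigr => a _; rewrite gapE.
case: (boolP [exists b : 'I_n, 0 < y b]) => [y_pos | y_npos].
  rewrite -subr_ge0 (sigma_rm_value_gap _ _ y_pos).
  apply: divr_ge0; last by apply: sumr_ge0 => a _; apply: pos_ge0.
  under eq_bigr do rewrite gapE.
  rewrite -[X in X <= _]orth -subr_ge0 -sumrB; apply: sumr_ge0 => a _.
  by rewrite -mulrBl pos_monotone.
(* If the updated regrets [y] are nowhere positive, neither are [r]: both strategies
   are uniform. *)
suff r_npos : ~~ [exists b : 'I_n, 0 < r b].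
  by rewrite /S /sigma_rm (negbTE r_npos) (negbTE y_npos).
have y_le0 (a : 'I_n) : y a <= 0.
  by rewrite leNgt; apply: contra y_npos => ya; apply/existsP; exists a.
have sq_le0 : \sum_(a < n) pos (r a) ^+ 2 <= 0.
  have -> : \sum_(a < n) pos (r a) ^+ 2
            = \sum_(a < n) pos (r a) * y a - \sum_(a < n) pos (r a) * (y a - r a).
    by rewrite -sumrB; apply: eq_bigr => a _; rewrite -pos_mulr; ring.
  by rewrite orth subr0; apply: sumr_le0 => a _; rewrite mulr_ge0_le0 ?pos_ge0.
apply/negP => /existsP[b rb]; move: sq_le0; rewrite leNgt (psumr_gt0 (b := b)) //.
  by move=> a; rewrite sqr_ge0.
by rewrite exprn_gt0 ?pos_gt0.
Qed.

End RegretMatching.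

Lemma partition_big_undup (V : nmodType) (I J : eqType) (s : seq I) (lab : I -> J)
    (F : I -> V) :
  \sum_(x <- s) F x = \sum_(j <- undup (map lab s)) \sum_(x <- s | lab x == j) F x.
Proof.
rewrite (exchange_big_dep xpredT) //=; apply: eq_big_seq => x x_in.
rewrite big_mkcond (bigD1_seq (lab x)) ?undup_uniq ?mem_undup ?map_f //= eqxx.
by rewrite big1 ?addr0 // => j; rewrite eq_sym => /negbTE ->.
Qed.

Lemma eq_big_iota0 (V : nmodType) n (F G : nat -> V) :
  (forall a, (a < n)%N -> F a = G a) ->
  \sum_(a <- iota 0 n) F a = \sum_(a <- iota 0 n) G a.
Proof. by move=> FG; apply: eq_big_seq => a; rewrite mem_iota add0n => /andP[_ /FG]. Qed.

Lemma big_iota0_ord (V : nmodType) n (F : nat -> V) :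
  \sum_(a <- iota 0 n) F a = \sum_(a < n) F a.
Proof. by rewrite -(big_mkord xpredT) /index_iota subn0. Qed.

Section GameTrees.
Variable R : realFieldType.
Implicit Types (b c : bool) (t : tree R) (s : strat R) (p q : player) (h z : seq nat).

Definition player_strat q s1 s2 : strat R := if q is P1 then s1 else s2.

Fixpoint value p s1 s2 t : R :=
  match t with
  | Leaf u => if p is P1 then u else - u
  | Chance n pr k => \sum_(a <- iota 0 n) pr a * value p s1 s2 (k a)
  | Node q J n k => \sum_(a <- iota 0 n) player_strat q s1 s2 J a * value p s1 s2 (k a)
  end.

Definition children t : option (nat * (nat -> tree R)) :=
  match t with Leaf _ => None | Chance n _ k | Node _ _ n k => Some (n, k) end.

Lemma node_at_nil t : node_at t [::] = Some t.
Proof. by case: t. Qed.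

Lemma node_at_cons t n k a z : children t = Some (n, k) ->
  node_at t (a :: z) = if (a < n)%N then node_at (k a) z else None.
Proof. by case: t => //= [? ? ?|? ? ? ?] [<- <-]. Qed.

Lemma node_at_cat t h z :
  node_at t (h ++ z) = if node_at t h is Some t' then node_at t' z else None.
Proof.
elim: h t => [|a h IH] [u|n pr k|q J n k] //=; case: (a < n)%N => //.
all: by case: z.
Qed.

Lemma path_prob_nil c b1 b2 s1 s2 t : path_prob c b1 b2 s1 s2 t [::] = 1.
Proof. by case: t. Qed.

Lemma path_prob_cons c b1 b2 s1 s2 t n k a z : children t = Some (n, k) ->
  path_prob c b1 b2 s1 s2 t (a :: z)
  = path_prob c b1 b2 s1 s2 t [:: a] * path_prob c b1 b2 s1 s2 (k a) z.
Proof. by case: t => //= [? ? ?|? ? ? ?] [_ <-]; rewrite path_prob_nil mulr1. Qed.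

Lemma path_prob_cat c b1 b2 s1 s2 t t' h z : node_at t h = Some t' ->
  path_prob c b1 b2 s1 s2 t (h ++ z)
  = path_prob c b1 b2 s1 s2 t h * path_prob c b1 b2 s1 s2 t' z.
Proof.
elim: h t => [|a h IH] t; first by rewrite node_at_nil => -[<-]; rewrite path_prob_nil mul1r.
by case: t => [u|n pr k|q J n k] //=; case: (a < n)%N => // /IH ->; rewrite mulrA.
Qed.

Lemma eq_path_prob c b1 b2 s1 s2 s1' s2' t z :
  (b1 -> s1 = s1') -> (b2 -> s2 = s2') ->
  path_prob c b1 b2 s1 s2 t z = path_prob c b1 b2 s1' s2' t z.
Proof.
move=> e1 e2; elim: z t => [|a z IH] [u|n pr k|[] J n k] //=; rewrite IH //.
  by case: b1 e1 {IH} => // ->.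
by case: b2 e2 {IH} => // ->.
Qed.

Lemma path_prob_split c b1 b2 s1 s2 t z :
  path_prob c b1 b2 s1 s2 t z * path_prob (~~ c) (~~ b1) (~~ b2) s1 s2 t z
  = path_prob true true true s1 s2 t z.
Proof.
elim: z t => [|a z IH] [u|n pr k|q J n k] /=; rewrite ?mulr1 // -IH.
  by case: c {IH} => /=; ring.
by case: q {IH}; case: b1; case: b2 => /=; ring.
Qed.

Lemma histories_children t n k : children t = Some (n, k) ->
  histories t = [::] :: flatten [seq [seq a :: h | h <- histories (k a)] | a <- iota 0 n].
Proof. by case: t => //= [? ? ?|? ? ? ?] [<- <-]. Qed.

Lemma terminals_children t n k : children t = Some (n, k) ->
  terminals t = flatten [seq [seq a :: z | z <- terminals (k a)] | a <- iota 0 n].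
Proof.
move=> tk; rewrite /terminals (histories_children tk) /=.
have -> : is_terminal t [::] = false by case: t tk.
rewrite filter_flatten -map_comp; congr flatten; apply/eq_in_map => a.
rewrite mem_iota add0n => /andP[_ a_lt] /=; rewrite filter_map; congr map.
by apply: eq_filter => z; rewrite /is_terminal /= (node_at_cons _ _ tk) a_lt.
Qed.

Lemma big_histories t n k (F : seq nat -> R) : children t = Some (n, k) ->
  \sum_(h <- histories t) F h
  = F [::] + \sum_(a <- iota 0 n) \sum_(h <- histories (k a)) F (a :: h).
Proof.
move=> tk; rewrite (histories_children tk) big_cons big_flatten big_map.
by congr (_ + _); apply: eq_bigr => a _; rewrite big_map.
Qed.

Lemma big_terminals t n k (F : seq nat -> R) : children t = Some (n, k) ->
  \sum_(z <- terminals t) F z = \sum_(a <- iota 0 n) \sum_(z <- terminals (k a)) F (a :: z).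
Proof.
move=> tk; rewrite (terminals_children tk) big_flatten big_map.
by apply: eq_bigr => a _; rewrite big_map.
Qed.

Lemma prefix_cons (a b : nat) h z :
  Defs.prefix (a :: h) (b :: z) = (a == b) && Defs.prefix h z.
Proof. by rewrite /Defs.prefix /= eqseq_cons. Qed.

Lemma big_terminals_prefix t t' h (F : seq nat -> R) : node_at t h = Some t' ->
  \sum_(z <- terminals t | Defs.prefix h z) F z = \sum_(z <- terminals t') F (h ++ z).
Proof.
elim: h t F => [|a h IH] t F.
  by rewrite node_at_nil => -[<-]; rewrite (eq_bigl xpredT) // => -[].
case tk: (children t) => [[n k]|]; last by case: t tk.
rewrite (node_at_cons _ _ tk); case: ifP => // a_lt /(IH _ (fun z => F (a :: z))) <-.
rewrite big_mkcond (big_terminals _ tk) (bigD1_seq a) ?mem_iota ?iota_uniq //=.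
rewrite [X in _ + X]big1 ?addr0 => [|b b_neq_a]; last first.
  by apply: big1 => z _; rewrite prefix_cons eq_sym (negbTE b_neq_a).
by rewrite [RHS]big_mkcond; apply: eq_bigr => z _; rewrite prefix_cons eqxx.
Qed.

Lemma util_cat t t' p h z : node_at t h = Some t' -> util t p (h ++ z) = util t' p z.
Proof. by move=> tt'; rewrite /util node_at_cat tt'. Qed.

Lemma exp_util_value t p s1 s2 : exp_util t p s1 s2 = value p s1 s2 t.
Proof.
elim: t => [u|n pr k IH|q J n k IH].
- by rewrite /exp_util /terminals /= big_seq1 mul1r /util /=; case: p.
- have tk : children (Chance n pr k) = Some (n, k) by [].
  rewrite /exp_util (big_terminals _ tk) /=.
  apply: eq_big_iota0 => a a_lt; rewrite -IH /exp_util mulr_sumr.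
  by apply: eq_bigr => z _; rewrite mulrA /util /= a_lt.
- have tk : children (Node q J n k) = Some (n, k) by [].
  rewrite /exp_util (big_terminals _ tk) /=.
  apply: eq_big_iota0 => a a_lt; rewrite -IH /exp_util mulr_sumr.
  by apply: eq_bigr => z _; rewrite mulrA /util /= a_lt; case: q {tk}.
Qed.

Lemma pi_opp_mul_own t p s1 s2 z :
  Defs.pi_opp t p s1 s2 z * path_prob false (peq p P1) (peq p P2) s1 s2 t z
  = path_prob true true true s1 s2 t z.
Proof. by rewrite /Defs.pi_opp; case: p; exact: path_prob_split. Qed.

Lemma own_path_prob_prod t p s1 s2 z :
  path_prob false (peq p P1) (peq p P2) s1 s2 t z
  = \prod_(x <- own_seq p t z) player_strat p s1 s2 x.1 x.2.
Proof.
elim: z t => [|a z IH] [u|n pr k|q J n k] /=; rewrite ?big_nil // ?mul1r IH //.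
by case: q {IH}; case: p; rewrite /= ?mul1r ?big_cons.
Qed.

Lemma pi_opp_cat t t' p s1 s2 h z : node_at t h = Some t' ->
  Defs.pi_opp t p s1 s2 (h ++ z) = Defs.pi_opp t p s1 s2 h * Defs.pi_opp t' p s1 s2 z.
Proof. exact: path_prob_cat. Qed.

Lemma cf_value_node t t' p s1 s2 h : node_at t h = Some t' ->
  cf_value t p s1 s2 h = Defs.pi_opp t p s1 s2 h * value p s1 s2 t'.
Proof.
move=> tt'; rewrite /cf_value (big_terminals_prefix _ tt') -exp_util_value mulr_sumr.
apply: eq_bigr => z _; rewrite (pi_opp_cat _ _ _ _ tt') (util_cat _ _ tt').
rewrite /pi_own_from tt' drop_size_cat // -!mulrA; congr (_ * _).
by rewrite mulrA pi_opp_mul_own.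
Qed.

Lemma cf_value_rcons t p s1 s2 h J n k a :
  node_at t h = Some (Node p J n k) -> (a < n)%N ->
  cf_value t p s1 s2 (rcons h a) = Defs.pi_opp t p s1 s2 h * value p s1 s2 (k a).
Proof.
move=> tJ a_lt; rewrite -cats1 (@cf_value_node _ (k a)); last first.
  by rewrite node_at_cat tJ /= a_lt node_at_nil.
rewrite (pi_opp_cat _ _ _ _ tJ) /Defs.pi_opp /= path_prob_nil.
by case: p tJ; rewrite /= !mulr1.
Qed.

Lemma peqP p q : reflect (p = q) (peq p q).
Proof. by case: p; case: q; constructor. Qed.

Lemma peqxx p : peq p p.
Proof. by case: p. Qed.

Definition infoset_label t h : nat :=
  if node_at t h is Some (Node _ J _ _) then J else 0%N.

Section PerformanceDifference.
Variables (p : player) (s1 s2 s1' s2' : strat R).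
Hypothesis opp_fixed : forall q, ~~ peq q p -> player_strat q s1' s2' = player_strat q s1 s2.

Local Notation own := (player_strat p s1 s2).
Local Notation own' := (player_strat p s1' s2').

Lemma pi_opp_deviation t z : Defs.pi_opp t p s1' s2' z = Defs.pi_opp t p s1 s2 z.
Proof.
by case: p opp_fixed => opp_eq; apply: eq_path_prob => // _;
  [exact: (opp_eq P2) | exact: (opp_eq P1)].
Qed.

Definition perf_diff_term t h : R :=
  if node_at t h is Some (Node q J n k) then
    if peq q p then path_prob true true true s1' s2' t h
                    * \sum_(a <- iota 0 n) (own' J a - own J a) * value p s1 s2 (k a)
    else 0
  else 0.

Lemma perf_diff_term_cons t n k a h : children t = Some (n, k) -> (a < n)%N ->
  perf_diff_term t (a :: h)
  = path_prob true true true s1' s2' t [:: a] * perf_diff_term (k a) h.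
Proof.
move=> tk a_lt; rewrite /perf_diff_term (node_at_cons _ _ tk) a_lt.
rewrite (path_prob_cons _ _ _ _ _ _ _ tk).
case: (node_at (k a) h) => [[u|n' pr k'|q J n' k']|]; rewrite ?mulr0 //.
by case: (peq q p); rewrite ?mulr0 // mulrA.
Qed.

Lemma performance_difference t :
  value p s1' s2' t - value p s1 s2 t = \sum_(h <- histories t) perf_diff_term t h.
Proof.
elim: t => [u|n pr k IH|q J n k IH]; first by rewrite /= big_seq1 /perf_diff_term subrr.
  have tk : children (Chance n pr k) = Some (n, k) by [].
  rewrite (big_histories _ tk) /= add0r -sumrB.
  apply: eq_big_iota0 => a a_lt; rewrite -mulrBr IH mulr_sumr.
  apply: eq_bigr => h _; rewrite (perf_diff_term_cons _ tk) //.
  by rewrite /= path_prob_nil mulr1.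
have tk : children (Node q J n k) = Some (n, k) by [].
have step a h : (a < n)%N -> perf_diff_term (Node q J n k) (a :: h)
                              = player_strat q s1' s2' J a * perf_diff_term (k a) h.
  move=> a_lt; rewrite (perf_diff_term_cons _ tk) //.
  by case: (q); rewrite /= path_prob_nil mulr1.
rewrite (big_histories _ tk) {1}/perf_diff_term /= -sumrB.
case: (boolP (peq q p)) => [/peqP qp | /opp_fixed opp_eq].
  subst q; rewrite mul1r -big_split /=; apply: eq_big_iota0 => a a_lt.
  under eq_bigr do rewrite step //.
  by rewrite -mulr_sumr -IH; ring.
rewrite add0r; apply: eq_big_iota0 => a a_lt.
under eq_bigr do rewrite step //.
by rewrite -mulr_sumr -IH opp_eq mulrBr.
Qed.

Lemma perf_diff_by_infoset t :
  \sum_(h <- histories t) perf_diff_term t h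
  = \sum_(J <- undup (map (infoset_label t) (histories t)))
      \sum_(h <- histories t | in_infoset t p J h) perf_diff_term t h.
Proof.
rewrite (partition_big_undup _ (infoset_label t)); apply: eq_bigr => J _.
rewrite big_mkcond [RHS]big_mkcond; apply: eq_bigr => h _.
rewrite /perf_diff_term /in_infoset /infoset_label.
by case: node_at => [[u|n pr k|q J' n k]|]; rewrite ?if_same //; case: peq; rewrite ?if_same.
Qed.

Lemma perf_diff_term_in_infoset t nA J h : well_formed t nA -> in_infoset t p J h ->
  perf_diff_term t h = \prod_(x <- own_seq p t h) own' x.1 x.2
    * \sum_(a <- iota 0 (nA p J)) (own' J a - own J a) * cf_value t p s1 s2 (rcons h a).
Proof.
rewrite /in_infoset /perf_diff_term => -[wf_nodes _].
case tJ: node_at => [[u|n pr k|q J' n k]|] //; case/andP => /peqP qp /eqP J'J.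
subst q J'; have [nE _] := wf_nodes _ _ _ _ _ tJ; subst n.
rewrite peqxx -(pi_opp_mul_own t p s1' s2') own_path_prob_prod pi_opp_deviation.
rewrite (mulrC (Defs.pi_opp _ _ _ _ _)) -mulrA; congr (_ * _).
rewrite mulr_sumr; apply: eq_big_iota0 => a a_lt.
by rewrite (cf_value_rcons _ _ tJ a_lt) mulrCA.
Qed.

Lemma infoset_perf_diff_ge0 t nA J : well_formed t nA -> perfect_recall t ->
  (forall I a, 0 <= own' I a) ->
  \sum_(a < nA p J) own J a * cfv t p s1 s2 J a
    <= \sum_(a < nA p J) own' J a * cfv t p s1 s2 J a ->
  0 <= \sum_(h <- histories t | in_infoset t p J h) perf_diff_term t h.
Proof.
move=> wf recall own'_ge0 improves.
case: (boolP (has (in_infoset t p J) (histories t))) => [/hasP[h0 _ h0J] | /hasPn noJ].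
  2: by rewrite big_seq_cond big1 // => h /andP[/noJ/negbTE ->].
(* By perfect recall, p's own reach probability is the same at every history of J. *)
pose c := \prod_(x <- own_seq p t h0) own' x.1 x.2.
have -> : \sum_(h <- histories t | in_infoset t p J h) perf_diff_term t h
          = c * \sum_(a < nA p J) (own' J a - own J a) * cfv t p s1 s2 J a.
  rewrite (eq_bigr _ (fun h hJ => perf_diff_term_in_infoset wf hJ)).
  under eq_bigr => h hJ do rewrite (recall p J h h0 hJ h0J).
  rewrite -mulr_sumr exchange_big /= big_iota0_ord; congr (_ * _).
  by apply: eq_bigr => a _; rewrite /cfv mulr_sumr.
apply: mulr_ge0; first by apply: prodr_ge0 => x _; apply: own'_ge0.
by under eq_bigr do rewrite mulrBl; rewrite sumrB subr_ge0.
Qed.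

Lemma value_le_of_local_improvement t nA : well_formed t nA -> perfect_recall t ->
  (forall I a, 0 <= own' I a) ->
  (forall J, \sum_(a < nA p J) own J a * cfv t p s1 s2 J a
             <= \sum_(a < nA p J) own' J a * cfv t p s1 s2 J a) ->
  value p s1 s2 t <= value p s1' s2' t.
Proof.
move=> wf recall own'_ge0 improves.
rewrite -subr_ge0 performance_difference perf_diff_by_infoset.
by apply: sumr_ge0 => J _; exact: (infoset_perf_diff_ge0 wf recall own'_ge0 (improves J)).
Qed.

End PerformanceDifference.

End GameTrees.

Theorem theorem3 (R : realFieldType) (G : tree R) (nA : player -> nat -> nat)
  (HG : well_formed G nA) (Hpr : perfect_recall G) (plus : bool) (T : nat) (p : player) :
  match p with
  | P1 =>
      exp_util G P1 (cfr_strat plus G nA T P1) (cfr_strat plus G nA T P2)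
      <= exp_util G P1 (cfr_strat plus G nA T.+1 P1) (cfr_strat plus G nA T P2)
  | P2 =>
      exp_util G P2 (cfr_strat plus G nA T.+1 P1) (cfr_strat plus G nA T P2)
      <= exp_util G P2 (cfr_strat plus G nA T.+1 P1) (cfr_strat plus G nA T.+1 P2)
  end.
Proof.
case: p; rewrite !exp_util_value;
  apply: (value_le_of_local_improvement _ HG Hpr) => [[] | I a | I] //;
  by [apply: sigma_rm_ge0 | apply: regret_matching_improves].
Qed.
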